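(* Let $f_0(x)=x^4+12x^3+14x^2-12x+1$ and $f_{1728}(x)=x^4+18x^3+74x^2-18x+1$, and let $l$ be a prime. (a) If $l\equiv 4\pmod 5$ and $\left(\frac{-3}{l}\right)=-1$, then $f_0(x)$ splits into distinct linear factors modulo $l$. (b) If $l\equiv 4\pmod 5$ and $\left(\frac{-4}{l}\right)=-1$, then $f_{1728}(x)$ splits into distinct linear factors modulo $l$. (c) If $l\equiv 1\pmod 5$ and $\left(\frac{-3}{l}\right)=-1$, then $f_0(x)$ factors modulo $l$ as a product of two irreducible quadratics of the form $x^2+ax-1$. (d) If $l\equiv 1\pmod 5$ and $\left(\frac{-4}{l}\right)=-1$, then $f_{1728}(x)$ factors modulo $l$ as a product of two irreducible quadratics of the form $x^2+ax-1$.
   Context: $\left(\frac{\cdot}{l}\right)$ denotes the Kronecker/Legendre symbol. *)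

From HB Require Import structures.
From mathcomp Require Import all_boot all_order all_algebra.
Set Implicit Arguments. Unset Strict Implicit. Unset Printing Implicit Defensive.
Import Order.TTheory GRing.Theory Num.Theory.
Local Open Scope ring_scope.

(* Legendre symbol (a / l) for a prime l (the Kronecker symbol agrees with it
   for odd primes l; the hypotheses of the theorem force l odd). *)
Definition legendre (a : int) (l : nat) : int :=
  if (l%:Z %| a)%Z then 0
  else if [exists x : 'I_l, ((x%:Z) ^+ 2 == a %[mod l%:Z])%Z] then 1 else -1.

Definition f0 (R : nzRingType) : {poly R} :=
  'X^4 + 12%:R *: 'X^3 + 14%:R *: 'X^2 - 12%:R *: 'X + 1.

Definition f1728 (R : nzRingType) : {poly R} :=
  'X^4 + 18%:R *: 'X^3 + 74%:R *: 'X^2 - 18%:R *: 'X + 1.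

Definition splits_distinct (F : fieldType) (p : {poly F}) : Prop :=
  exists rs : seq F, uniq rs /\ p = \prod_(r <- rs) ('X - r%:P).

Definition two_quad_factors (F : fieldType) (p : {poly F}) : Prop :=
  exists a b : F,
    [/\ p = ('X^2 + a *: 'X - 1) * ('X^2 + b *: 'X - 1),
        irreducible_poly ('X^2 + a *: 'X - 1) &
        irreducible_poly ('X^2 + b *: 'X - 1)].

From HB Require Import structures.
From mathcomp Require Import all_boot all_order all_algebra all_field ring.
Import Order.TTheory GRing.Theory Num.Theory.
Set Implicit Arguments. Unset Strict Implicit. Unset Printing Implicit Defensive.
Local Open Scope ring_scope.

(* Let g be a square root of 5 in F_l (l = +-1 mod 5).  Then
   f0 = (x^2 + (6 - 2g) x - 1) (x^2 + (6 + 2g) x - 1) and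
   f1728 = (x^2 + (9 - g) x - 1) (x^2 + (9 + g) x - 1), and x^2 + a x - 1 has two distinct
   roots or is irreducible according as its discriminant a^2 + 4 is a nonzero square or not.
   Up to nonzero square factors these discriminants are -3 (+-2g - 10) for f0 and
   -4 (+-2g - 10) for f1728.  Choosing g = z - z^2 - z^3 + z^4 for a primitive fifth root of
   unity z in an algebraic closure, 2g - 10 and -2g - 10 are the squares of 2 (z^2 - z^3) and
   2 (z - z^4); the Frobenius z |-> z^l fixes both when l = 1 and negates both when l = 4
   (mod 5), so +-2g - 10 is a square in F_l exactly when l = 1 (mod 5).  Since -3 (resp. -4)
   is a nonsquare and a product of two nonsquares of F_l is a square, the discriminants are
   squares exactly when l = 4 (mod 5). *)

Definition square (R : nzRingType) (x : R) : Prop := exists y, y ^+ 2 = x.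

Definition quad (R : nzRingType) (a : R) : {poly R} := 'X^2 + a *: 'X - 1.

Lemma square_mulr_sqr (F : fieldType) (x c : F) :
  c != 0 -> square (x * c ^+ 2) <-> square x.
Proof.
move=> c0; split=> [[y hy] | [y <-]]; last by exists (y * c); rewrite exprMn.
by exists (y / c); rewrite expr_div_n hy mulfK // expf_neq0.
Qed.

Lemma nonsquare_neq0 (R : nzRingType) (x : R) : ~ square x -> x != 0.
Proof. by apply: contra_not_neq => ->; exists 0; rewrite expr0n. Qed.

Lemma nonsquare_mul_square (F : fieldType) (x y : F) :
  ~ square x -> square y -> y != 0 -> ~ square (x * y).
Proof.
move=> nsq_x [c <-] y_neq0; apply/(square_mulr_sqr x); last exact: nsq_x.
by apply: contra_neq y_neq0 => ->; rewrite expr0n.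
Qed.

Lemma splits_distinct_mul (F : fieldType) (p q : {poly F}) :
  splits_distinct p -> splits_distinct q -> (forall x, root p x -> ~~ root q x) ->
  splits_distinct (p * q).
Proof.
move=> [rs [urs ->]] [ss [uss ->]] coprime_pq; exists (rs ++ ss).
rewrite big_cat cat_uniq urs uss andbT; split=> //; apply/hasPn => x x_ss.
apply/negP => x_rs; have := coprime_pq x.
by rewrite !root_prod_XsubC x_rs x_ss => /(_ isT).
Qed.

Section Quadratic.
Variable F : fieldType.
Implicit Types a b : F.

Lemma size_quad a : size (quad a) = 3%N.
Proof.
rewrite /quad -addrA size_polyDl ?size_polyXn // (leq_ltn_trans (size_polyD _ _)) //.
rewrite size_polyN size_polyC oner_neq0 gtn_max.
by rewrite (leq_ltn_trans (size_scale_leq _ _)) ?size_polyX.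
Qed.

Lemma coef_quad a i : (quad a)`_i = [:: -1; a; 1]`_i.
Proof.
rewrite /quad !coefE.
by case: i => [|[|[|i]]]; rewrite /= ?(mulr0, mulr1, add0r, addr0, subr0, nth_nil).
Qed.

Lemma quad_monic a : quad a \is monic.
Proof. by rewrite monicE lead_coefE size_quad coef_quad. Qed.

Lemma horner_quad a x : (quad a).[x] = x ^+ 2 + a * x - 1.
Proof. by rewrite /quad !hornerE. Qed.

Lemma root_quad_coprime a b x : a != b -> root (quad a) x -> ~~ root (quad b) x.
Proof.
rewrite /root !horner_quad => neq_ab /eqP qa; apply: contra neq_ab => /eqP qb.
have x_neq0 : x != 0.
  by apply: contra_eq_neq qa => ->; rewrite expr0n mulr0 !add0r oppr_eq0 oner_neq0.
have : (a - b) * x = (x ^+ 2 + a * x - 1) - (x ^+ 2 + b * x - 1) by ring.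
by rewrite qa qb subrr => /eqP; rewrite mulf_eq0 (negPf x_neq0) orbF subr_eq0.
Qed.

Lemma quad_irreducible a : ~ square (a ^+ 2 + 4) -> irreducible_poly (quad a).
Proof.
move=> nonsq; apply: cubic_irreducible => [|x]; first by rewrite size_quad.
apply/negP; rewrite /root horner_quad => /eqP root_x; apply: nonsq.
exists (2 * x + a).
have -> : (2 * x + a) ^+ 2 = a ^+ 2 + 4 + 4 * (x ^+ 2 + a * x - 1) by ring.
by rewrite root_x mulr0 addr0.
Qed.

Lemma quad_mul_two_quad_factors a b :
  ~ square (a ^+ 2 + 4) -> ~ square (b ^+ 2 + 4) -> two_quad_factors (quad a * quad b).
Proof. by move=> nsq_a nsq_b; exists a, b; split=> //; exact: quad_irreducible. Qed.
End Quadratic.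

Section QuadraticOddChar.
Variable F : fieldType.
Hypothesis two_neq0 : 2 != 0 :> F.
Implicit Types a b : F.

Lemma quad_split a d : d ^+ 2 = a ^+ 2 + 4 -> d != 0 -> splits_distinct (quad a).
Proof.
move=> sqr_d d_neq0.
have disc_d : d ^+ 2 = (quad a)`_1 ^+ 2 - 4 * (quad a)`_0.
  by rewrite !coef_quad sqr_d /=; ring.
have /= := Pdeg2.FieldMonic.deg2_poly_factor two_neq0 (size_quad a) (quad_monic a) disc_d.
rewrite !coef_quad /= => ->.
exists [:: (- a - d) / 2; (- a + d) / 2]; split.
  rewrite /= inE andbT; apply: contra d_neq0 => /eqP eq_roots.
  have -> : d = (- a + d) / 2 - (- a - d) / 2 by field.
  by rewrite eq_roots subrr.
by rewrite !big_cons big_nil mulr1.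
Qed.

Lemma quad_mul_split a b : a != b ->
  square (a ^+ 2 + 4) -> a ^+ 2 + 4 != 0 -> square (b ^+ 2 + 4) -> b ^+ 2 + 4 != 0 ->
  splits_distinct (quad a * quad b).
Proof.
move=> neq_ab [d sqr_d] disc_a [e sqr_e] disc_b.
apply: splits_distinct_mul => [||x]; last exact: root_quad_coprime.
  by apply: (quad_split sqr_d); apply: contra_neq disc_a => d0; rewrite -sqr_d d0 expr0n.
by apply: (quad_split sqr_e); apply: contra_neq disc_b => e0; rewrite -sqr_e e0 expr0n.
Qed.
End QuadraticOddChar.

Lemma f0_factor (R : comNzRingType) (g : R) :
  g ^+ 2 = 5 -> f0 R = quad (6 - 2 * g) * quad (6 + 2 * g).
Proof.
move=> sqr_g; have sqr_gP : g%:P ^+ 2 = 5 by rewrite -rmorphXn sqr_g rmorph_nat.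
by rewrite /f0 /quad -!mul_polyC !rmorphB !rmorphD !rmorphM !rmorph_nat; ring: sqr_gP.
Qed.

Lemma f1728_factor (R : comNzRingType) (g : R) :
  g ^+ 2 = 5 -> f1728 R = quad (9 - g) * quad (9 + g).
Proof.
move=> sqr_g; have sqr_gP : g%:P ^+ 2 = 5 by rewrite -rmorphXn sqr_g rmorph_nat.
by rewrite /f1728 /quad -!mul_polyC !rmorphB [(9 + g)%:P]rmorphD !rmorph_nat; ring: sqr_gP.
Qed.

Section FifthRootOfUnity.
Variables (R : comNzRingType) (z : R).
Hypothesis z_cyclo : z ^+ 4 + z ^+ 3 + z ^+ 2 + z + 1 = 0.

Definition gauss5 : R := z - z ^+ 2 - z ^+ 3 + z ^+ 4.

Let z4E : z ^+ 4 = - (z ^+ 3 + z ^+ 2 + z + 1).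
Proof. by apply/eqP; rewrite -addr_eq0 -!addrA; apply/eqP; rewrite !addrA. Qed.

Lemma expr5_cyclo : z ^+ 5 = 1.
Proof. ring: z4E. Qed.

Lemma gauss5_sqr : gauss5 ^+ 2 = 5.
Proof. rewrite /gauss5; ring: z4E. Qed.

Lemma sqr_gauss5_z2 : (2 * (z ^+ 2 - z ^+ 3)) ^+ 2 = 2 * gauss5 - 10.
Proof. rewrite /gauss5; ring: z4E. Qed.

Lemma sqr_gauss5_z1 : (2 * (z - z ^+ 4)) ^+ 2 = - 2 * gauss5 - 10.
Proof. rewrite /gauss5; ring: z4E. Qed.
End FifthRootOfUnity.

Lemma finField_fixed_image (F : finFieldType) (K : fieldType) (iota : {rmorphism F -> K})
    (y : K) :
  y ^+ #|F| = y -> exists c, y = iota c.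
Proof.
move=> fixed_y.
have : root (map_poly iota ('X^#|F| - 'X)) y.
  by rewrite rmorphB /= map_polyXn map_polyX /root !hornerE fixed_y subrr.
rewrite finField_genPoly.
have -> : map_poly iota (\prod_c ('X - c%:P)) = \prod_(z <- map iota (enum F)) ('X - z%:P).
  rewrite rmorph_prod big_map big_enum; apply: eq_bigr => c _.
  by rewrite rmorphB /= map_polyX map_polyC.
by rewrite root_prod_XsubC => /mapP [c _ ->]; exists c.
Qed.

Section FrobeniusFp.
Variable l : nat.
Hypothesis l_prime : prime l.
Variables (K : fieldType) (iota : {rmorphism 'F_l -> K}).

Let pcharK : l \in [pchar K] := rmorph_pchar iota (pchar_Fp l_prime).
Local Notation phi := (pFrobenius_aut pcharK).

Lemma frob_iota (c : 'F_l) : phi (iota c) = iota c.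
Proof. by rewrite pFrobenius_autE -rmorphXn -{2}(expf_card c) card_Fp. Qed.

Lemma frob_fixed_image (y : K) : phi y = y -> exists c, y = iota c.
Proof. by move=> fixed_y; apply: finField_fixed_image; rewrite card_Fp. Qed.

Lemma square_frobP (D : 'F_l) (y : K) : y ^+ 2 = iota D -> square D <-> phi y = y.
Proof.
move=> sqr_y; split=> [[d sqr_d] | /frob_fixed_image [d y_d]].
  have /eqP := sqr_y; rewrite -sqr_d rmorphXn eqf_sqr.
  by case/orP => /eqP ->; rewrite ?rmorphN; [|congr (- _)]; apply: frob_iota.
by exists d; apply: (fmorph_inj iota); rewrite rmorphXn -y_d.
Qed.

Lemma frob_nonsquare (D : 'F_l) (y : K) : y ^+ 2 = iota D -> ~ square D -> phi y = - y.
Proof.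
move=> sqr_y /(square_frobP sqr_y) not_fixed.
have /eqP : phi y ^+ 2 = y ^+ 2 by rewrite -rmorphXn sqr_y; apply: frob_iota.
by rewrite eqf_sqr => /orP [/eqP | /eqP].
Qed.

Lemma frob_neg_nonsquare (D : 'F_l) (y : K) :
  2 != 0 :> 'F_l -> D != 0 -> y ^+ 2 = iota D -> phi y = - y -> ~ square D.
Proof.
move=> two_neq0 D_neq0 sqr_y frob_y /(square_frobP sqr_y) fixed_y.
have /eqP : 2 * y = 0 by rewrite mulr_natl mulr2n -{1}fixed_y frob_y addNr.
rewrite -(rmorph_nat iota) mulf_eq0 fmorph_eq0 (negPf two_neq0) /= => /eqP y0.
by move: D_neq0; rewrite -(fmorph_eq0 iota) -sqr_y y0 expr0n eqxx.
Qed.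

Lemma frob_root5 (z : K) : z ^+ 5 = 1 -> phi z = z ^+ (l %% 5).
Proof.
by move=> z5; rewrite pFrobenius_autE {1}(divn_eq l 5) exprD mulnC exprM z5 expr1n mul1r.
Qed.

Section FrobeniusFifthRoot.
Variable z : K.
Hypothesis z_cyclo : z ^+ 4 + z ^+ 3 + z ^+ 2 + z + 1 = 0.
Let z5 : z ^+ 5 = 1 := expr5_cyclo z_cyclo.

Lemma frob_root5_mod1 : (l %% 5 = 1)%N ->
  [/\ phi (gauss5 z) = gauss5 z, phi (2 * (z ^+ 2 - z ^+ 3)) = 2 * (z ^+ 2 - z ^+ 3)
    & phi (2 * (z - z ^+ 4)) = 2 * (z - z ^+ 4)].
Proof.
move=> l1; rewrite /gauss5 !(rmorphXn, rmorph_nat, rmorphB, rmorphD, rmorphM) /=.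
by rewrite frob_root5 // l1.
Qed.

Lemma frob_root5_mod4 : (l %% 5 = 4)%N ->
  [/\ phi (gauss5 z) = gauss5 z, phi (2 * (z ^+ 2 - z ^+ 3)) = - (2 * (z ^+ 2 - z ^+ 3))
    & phi (2 * (z - z ^+ 4)) = - (2 * (z - z ^+ 4))].
Proof.
move=> l4; rewrite /gauss5 !(rmorphXn, rmorph_nat, rmorphB, rmorphD, rmorphM) /=.
by rewrite frob_root5 // l4; split; ring: z5.
Qed.
End FrobeniusFifthRoot.
End FrobeniusFp.

Lemma closed_sqrt (K : closedFieldType) (c : K) : exists y, y ^+ 2 = c.
Proof.
have [y sqr_y] := @solve_monicpoly K 2 (nth 0 [:: c]) isT.
by exists y; rewrite sqr_y !big_ord_recl big_ord0 /=; ring.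
Qed.

Lemma closed_cyclo5 (K : closedFieldType) :
  exists z : K, z ^+ 4 + z ^+ 3 + z ^+ 2 + z + 1 = 0.
Proof.
have [z z4] := @solve_monicpoly K 4 (nth 0 [:: -1; -1; -1; -1]) isT.
by exists z; rewrite z4 !big_ord_recl big_ord0 /=; ring.
Qed.

Lemma Fp_nonsquare_mul l (x y : 'F_l) :
  prime l -> ~ square x -> ~ square y -> square (x * y).
Proof.
move=> l_prime nsq_x nsq_y; have [K [iota _]] := countable_algebraic_closure 'F_l.
have [[u sqr_u] [v sqr_v]] := (closed_sqrt (iota x), closed_sqrt (iota y)).
have sqr_uv : (u * v) ^+ 2 = iota (x * y) by rewrite exprMn sqr_u sqr_v rmorphM.
apply/(square_frobP l_prime sqr_uv); rewrite rmorphM /=.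
by rewrite (frob_nonsquare l_prime sqr_u) // (frob_nonsquare l_prime sqr_v) // mulrNN.
Qed.

Lemma Fp_square_nonsquare_mul l (m e : 'F_l) :
  prime l -> ~ square m -> e != 0 -> square (m * e) <-> ~ square e.
Proof.
move=> l_prime nsq_m e_neq0; split; last exact: Fp_nonsquare_mul.
by move=> sq_me sq_e; exact: nonsquare_mul_square sq_e e_neq0 sq_me.
Qed.

Lemma legendre_nonsquare (l a : nat) :
  prime l -> legendre (- a%:R) l = -1 -> ~ square (- a%:R : 'F_l).
Proof.
move=> l_prime; rewrite /legendre; case: ifP => // _; case: existsP => // no_root _ [c sqr_c].
have c_lt_l : (c < l)%N by rewrite -[X in (_ < X)%N](Fp_cast l_prime) ltn_ord.
apply: no_root; exists (Ordinal c_lt_l).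
rewrite /= eqz_mod_dvd (dvdz_pcharf (pchar_Fp l_prime)) rmorphB rmorphXn /=.
rewrite -[c%:~R]/(c%:R) natr_Zp rmorphN natz sqr_c opprK.
by rewrite -[X in _ + X]/(a%:R) addNr.
Qed.

Lemma natr_Fp_neq0 l n : prime l -> (0 < n < l)%N -> n%:R != 0 :> 'F_l.
Proof.
move=> l_prime /andP [n_gt0 n_lt_l]; rewrite -(dvdn_pcharf (pchar_Fp l_prime)).
by apply: contraL n_lt_l => /(dvdn_leq n_gt0); rewrite leqNgt.
Qed.

Lemma sqrt5_nonzero (F : fieldType) (g : F) :
  2 != 0 :> F -> 5 != 0 :> F -> g ^+ 2 = 5 ->
  [/\ g != 0, 1 - g != 0, 1 + g != 0, 2 * g - 10 != 0 & - 2 * g - 10 != 0].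
Proof.
move=> two_neq0 five_neq0 sqr_g.
have : (1 - g) * (1 + g) != 0.
  by rewrite (_ : _ * _ = - (2 * 2)) ?oppr_eq0 ?mulf_neq0 //; ring: sqr_g.
have : (2 * g - 10) * (- 2 * g - 10) != 0.
  by rewrite (_ : _ * _ = 2 ^+ 4 * 5) ?mulf_neq0 ?expf_neq0 //; ring: sqr_g.
rewrite !mulf_eq0 !negb_or => /andP [-> ->] /andP [-> ->]; split=> //.
by apply: contra_neq five_neq0 => g0; rewrite -sqr_g g0 expr0n.
Qed.

Section PrimesMod5.
Variable l : nat.
Hypothesis l_prime : prime l.
Hypothesis l_mod5 : (l %% 5 = 1 \/ l %% 5 = 4)%N.

Let natr_neq0 n : (0 < n <= 5)%N -> n%:R != 0 :> 'F_l.
Proof.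
have l_gt5 : (5 < l)%N.
  by move: l_prime l_mod5; case: l => [|[|[|[|[|[|l']]]]]] // _ [].
by case/andP=> n_gt0 n_le5; apply: natr_Fp_neq0; rewrite // n_gt0 (leq_ltn_trans n_le5).
Qed.

Let two_neq0 : 2 != 0 :> 'F_l := @natr_neq0 2 isT.
Let five_neq0 : 5 != 0 :> 'F_l := @natr_neq0 5 isT.

Lemma Fp_sqrt5 : exists g : 'F_l,
  [/\ g ^+ 2 = 5, square (2 * g - 10) <-> (l %% 5 = 1)%N
    & square (- 2 * g - 10) <-> (l %% 5 = 1)%N].
Proof.
have [K [iota _]] := countable_algebraic_closure 'F_l.
have [z z_cyclo] := closed_cyclo5 K.
pose phi := pFrobenius_aut (rmorph_pchar iota (pchar_Fp l_prime)).
have frob_mod1 := frob_root5_mod1 l_prime iota z_cyclo.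
have frob_mod4 := frob_root5_mod4 l_prime iota z_cyclo.
have square_mod5 D (y : K) : y ^+ 2 = iota D -> D != 0 ->
    ((l %% 5 = 1)%N -> phi y = y) -> ((l %% 5 = 4)%N -> phi y = - y) ->
    square D <-> (l %% 5 = 1)%N.
  move=> sqr_y D_neq0 frob1 frob4; split => [sq_D | /frob1 /(square_frobP l_prime sqr_y)//].
  case: l_mod5 => // /frob4 frob_y; exfalso.
  exact: (frob_neg_nonsquare two_neq0 D_neq0 sqr_y frob_y sq_D).
have G_fixed : phi (gauss5 z) = gauss5 z by case: l_mod5 => [/frob_mod1 | /frob_mod4] [].
have [g G_g] := @frob_fixed_image _ l_prime _ iota _ G_fixed.
have sqr_g : g ^+ 2 = 5.
  by apply: (fmorph_inj iota); rewrite rmorphXn -G_g gauss5_sqr // rmorph_nat.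
have [_ _ _ e_neq0 e'_neq0] := sqrt5_nonzero two_neq0 five_neq0 sqr_g.
exists g; split=> //.
  apply: (square_mod5 _ (2 * (z ^+ 2 - z ^+ 3))) => //; last 2 first.
  - by case/frob_mod1.
  - by case/frob_mod4.
  by rewrite sqr_gauss5_z2 // G_g rmorphB rmorphM !rmorph_nat.
apply: (square_mod5 _ (2 * (z - z ^+ 4))) => //; last 2 first.
- by case/frob_mod1.
- by case/frob_mod4.
by rewrite sqr_gauss5_z1 // G_g rmorphB rmorphM rmorphN !rmorph_nat.
Qed.

Lemma disc_square_mod5 (m e c D : 'F_l) :
  ~ square m -> e != 0 -> (square e <-> (l %% 5 = 1)%N) -> c != 0 -> D = m * e * c ^+ 2 ->
  D != 0 /\ (square D <-> (l %% 5 = 4)%N).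
Proof.
move=> nsq_m e_neq0 sq_e c_neq0 ->; split.
  by rewrite !mulf_neq0 ?expf_neq0 //; apply: nonsquare_neq0.
rewrite square_mulr_sqr // Fp_square_nonsquare_mul // sq_e.
by case: l_mod5 => ->.
Qed.

Lemma quad_mul_mod5 (a b : 'F_l) : a != b ->
  a ^+ 2 + 4 != 0 -> (square (a ^+ 2 + 4) <-> (l %% 5 = 4)%N) ->
  b ^+ 2 + 4 != 0 -> (square (b ^+ 2 + 4) <-> (l %% 5 = 4)%N) ->
  ((l %% 5 = 4)%N -> splits_distinct (quad a * quad b)) /\
  ((l %% 5 = 1)%N -> two_quad_factors (quad a * quad b)).
Proof.
move=> neq_ab a_neq0 sq_a b_neq0 sq_b; split=> l_mod.
  by apply: (quad_mul_split two_neq0) => //; [apply/sq_a | apply/sq_b].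
by apply: quad_mul_two_quad_factors; [move/sq_a | move/sq_b]; rewrite l_mod.
Qed.

Lemma f0_mod5 : ~ square (-3 : 'F_l) ->
  ((l %% 5 = 4)%N -> splits_distinct (f0 'F_l)) /\
  ((l %% 5 = 1)%N -> two_quad_factors (f0 'F_l)).
Proof.
move=> nsq3; have [g [sqr_g sq_e sq_e']] := Fp_sqrt5.
have [g_neq0 c_neq0 c'_neq0 e_neq0 e'_neq0] := sqrt5_nonzero two_neq0 five_neq0 sqr_g.
have [a_neq0 sq_a] :
    (6 - 2 * g) ^+ 2 + 4 != 0 /\ (square ((6 - 2 * g) ^+ 2 + 4) <-> (l %% 5 = 4)%N).
  apply: (disc_square_mod5 nsq3 e_neq0 sq_e (c := (1 - g) / 2)); last by field: sqr_g.
  by rewrite mulf_neq0 ?invr_eq0.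
have [b_neq0 sq_b] :
    (6 + 2 * g) ^+ 2 + 4 != 0 /\ (square ((6 + 2 * g) ^+ 2 + 4) <-> (l %% 5 = 4)%N).
  apply: (disc_square_mod5 nsq3 e'_neq0 sq_e' (c := (1 + g) / 2)); last by field: sqr_g.
  by rewrite mulf_neq0 ?invr_eq0.
rewrite (f0_factor sqr_g); apply: quad_mul_mod5 => //.
rewrite -subr_eq0 (_ : 6 - 2 * g - _ = - 4 * g); last by ring.
by rewrite mulf_neq0 ?oppr_eq0 ?(@natr_neq0 4).
Qed.

Lemma f1728_mod5 : ~ square (-4 : 'F_l) ->
  ((l %% 5 = 4)%N -> splits_distinct (f1728 'F_l)) /\
  ((l %% 5 = 1)%N -> two_quad_factors (f1728 'F_l)).
Proof.
move=> nsq4; have [g [sqr_g sq_e sq_e']] := Fp_sqrt5.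
have [g_neq0 _ _ e_neq0 e'_neq0] := sqrt5_nonzero two_neq0 five_neq0 sqr_g.
have c_neq0 : 3 / 2 != 0 :> 'F_l by rewrite mulf_neq0 ?invr_eq0 ?(@natr_neq0 3).
have [a_neq0 sq_a] : (9 - g) ^+ 2 + 4 != 0 /\ (square ((9 - g) ^+ 2 + 4) <-> (l %% 5 = 4)%N).
  by apply: (disc_square_mod5 nsq4 e_neq0 sq_e c_neq0); field: sqr_g.
have [b_neq0 sq_b] : (9 + g) ^+ 2 + 4 != 0 /\ (square ((9 + g) ^+ 2 + 4) <-> (l %% 5 = 4)%N).
  by apply: (disc_square_mod5 nsq4 e'_neq0 sq_e' c_neq0); field: sqr_g.
rewrite (f1728_factor sqr_g); apply: quad_mul_mod5 => //.
rewrite -subr_eq0 (_ : 9 - g - _ = - 2 * g); last by ring.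
by rewrite mulf_neq0 ?oppr_eq0.
Qed.
End PrimesMod5.

Theorem proposition2p1 (l : nat) (hl : prime l) :
  [/\ (l %% 5 = 4)%N -> legendre (-3) l = -1 -> splits_distinct (f0 [the fieldType of 'F_l]),
      (l %% 5 = 4)%N -> legendre (-4) l = -1 -> splits_distinct (f1728 [the fieldType of 'F_l]),
      (l %% 5 = 1)%N -> legendre (-3) l = -1 -> two_quad_factors (f0 [the fieldType of 'F_l]) &
      (l %% 5 = 1)%N -> legendre (-4) l = -1 -> two_quad_factors (f1728 [the fieldType of 'F_l])].
Proof.
split=> l_mod /(legendre_nonsquare hl) nsq.
- exact: (f0_mod5 hl (or_intror l_mod) nsq).1.
- exact: (f1728_mod5 hl (or_intror l_mod) nsq).1.
- exact: (f0_mod5 hl (or_introl l_mod) nsq).2.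
- exact: (f1728_mod5 hl (or_introl l_mod) nsq).2.
Qed.
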